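(* Let $n\ge1$, $\boldsymbol z\in\{0,1\}^n$ and $\boldsymbol y,\boldsymbol y'\in\overline{\mathbb R}^n$ with $y_i\le y_i'$ whenever $z_i=1$ and $y_i\ge y_i'$ whenever $z_i=0$. Then for the Mann–Whitney-type statistic, $t_{\mathrm R,\phi}(\boldsymbol z,\boldsymbol y)\le t_{\mathrm R,\phi}(\boldsymbol z,\boldsymbol y')$.
   Context: $\overline{\mathbb R}=\mathbb R\cup\{\pm\infty\}$. For $1\le i,j\le n$ and $y,y'\in\overline{\mathbb R}$, $\psi_{i,j}(y,y')=\mathbf 1\{y>y'\}+\mathbf 1\{y=y'\}\mathbf 1\{i\ge j\}$. $\phi$ is a fixed nondecreasing real function on the nonnegative integers. Mann–Whitney-type statistic: $t_{\mathrm R,\phi}(\boldsymbol z,\boldsymbol y)=\sum_{i=1}^nz_i\phi\big(\sum_{j=1}^n(1-z_j)\psi_{i,j}(y_i,y_j)\big)$. *)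

From mathcomp Require Import all_boot all_order all_algebra.
From mathcomp Require Import reals constructive_ereal.
Set Implicit Arguments. Unset Strict Implicit. Unset Printing Implicit Defensive.
Import Order.TTheory GRing.Theory Num.Theory.
Local Open Scope ring_scope.

Definition psi (R : realType) (n : nat) (i j : 'I_n) (y y' : \bar R) : nat :=
  ((y' < y)%E : nat) + ((y == y') && (j <= i)%N : nat).

Definition t_R_phi (R : realType) (n : nat) (phi : nat -> R)
    (z : 'I_n -> bool) (y : 'I_n -> \bar R) : R :=
  \sum_(i < n) (z i)%:R * phi (\sum_(j < n) (1 - z j) * psi i j (y i) (y j))%N.

From mathcomp Require Import all_boot all_order all_algebra.
From mathcomp Require Import reals constructive_ereal.
Import Order.TTheory GRing.Theory Num.Theory.
Local Open Scope ring_scope.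

Lemma psiE (R : realType) (n : nat) (i j : 'I_n) (a b : \bar R) :
  psi i j a b = (if (j <= i)%N then (b <= a)%E else (b < a)%E) :> nat.
Proof.
rewrite /psi eq_sym; case: (j <= i)%N; last by rewrite andbF addn0.
by rewrite andbT le_eqVlt; case: ltgtP.
Qed.

Lemma psi_mono (R : realType) (n : nat) (i j : 'I_n) (a a' b b' : \bar R) :
  (a <= a')%E -> (b' <= b)%E -> (psi i j a b <= psi i j a' b')%N.
Proof.
move=> le_aa' le_b'b; rewrite !psiE; case: (j <= i)%N.
- by case/boolP: (b <= a)%E => // ba; rewrite (le_trans le_b'b (le_trans ba le_aa')).
- by case/boolP: (b < a)%E => // ba; rewrite (le_lt_trans le_b'b (lt_le_trans ba le_aa')).
Qed.

Theorem lemma5 (R : realType) (n : nat) (phi : nat -> R)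
  (phi_mono : forall a b : nat, (a <= b)%N -> phi a <= phi b)
  (n_ge1 : (1 <= n)%N)
  (z : 'I_n -> bool) (y y' : 'I_n -> \bar R)
  (H1 : forall i, z i -> (y i <= y' i)%E)
  (H0 : forall i, ~~ z i -> (y' i <= y i)%E) :
  t_R_phi phi z y <= t_R_phi phi z y'.
Proof.
apply: ler_sum => i _; case zi: (z i); last by rewrite !mul0r.
rewrite !mul1r; apply/phi_mono/leq_sum => j _.
case zj: (z j); first by rewrite !mul0n.
by rewrite !mul1n; apply: psi_mono; [apply: H1 | apply: H0; rewrite zj].
Qed.
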